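(* In the abstract framework described in the context, assume (A4)–(A8) and the conformity condition. Then there is a constant $C>0$ independent of $p$ such that $$\|u-\Pi^\ell_p u\|_{L^2(\Omega,\Lambda^\ell)}\le C\,\varepsilon_{\ell-1}(p)\,\|u\|_{X(\Lambda^\ell)}\qquad\forall u\in\tilde X_p,\ \forall p\in\mathbb N .$$
   Context: Fix $d\ge2$, $\ell\in\{1,\dots,d-1\}$, and a bounded Lipschitz polyhedron $\Omega\subset\mathbb R^d$. $L^2(\Omega,\Lambda^k)$: $k$-forms with square-integrable coefficients, inner product $(u,v)=\int u\wedge\star v$; $\mathsf d^k$ exterior derivative; $H(\mathsf d,\Omega,\Lambda^k)=\{v\in L^2:\mathsf d^kv\in L^2\}$ (graph norm); $\mathring H(\mathsf d,\Omega,\Lambda^k)$ its subspace of forms with zero trace on $\partial\Omega$. Let $\mathcal M$ be a fixed finite partition of $\Omega$ into pairwise disjoint open polyhedral cells $K$ whose closures cover $\overline\Omega$. For each $K$ and $p\in\mathbb N$ let $W^\ell_p(K)$, $W^{\ell-1}_p(K)$ be spaces of smooth forms on $\overline K$ of degree $\ell$, $\ell-1$; set $\mathring W^k_p=\{v\in\mathring H(\mathsf d,\Omega,\Lambda^k):v|_K\in W^k_p(K)\ \forall K\}$, $k=\ell-1,\ell$. For each $K$ let $X(K,\Lambda^\ell)$, $S(K,\Lambda^{\ell-1})$, $S(K,\Lambda^\ell)$ be Hilbert spaces of forms on $K$ with $W^\ell_p(K)\subset X(K,\Lambda^\ell)$ and $W^{\ell-1}_p(K)\subset S(K,\Lambda^{\ell-1})$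 for all $p$. Global spaces: $X(\Lambda^\ell)=\{v\in\mathring H(\mathsf d,\Omega,\Lambda^\ell):v|_K\in X(K,\Lambda^\ell)\ \forall K\}$ with $\|u\|_{X(\Lambda^\ell)}^2=\|u\|_{H(\mathsf d)}^2+\sum_K\|u|_K\|_{X(K,\Lambda^\ell)}^2$, and analogously $S(\Lambda^k)\subset\mathring H(\mathsf d,\Omega,\Lambda^k)$, $k=\ell-1,\ell$. Let $\tilde X_p(K)=\{u\in X(K,\Lambda^\ell):\mathsf d^\ell u\in\mathsf d^\ell W^\ell_p(K)\}$ and $\tilde X_p=\{u\in X(\Lambda^\ell):\mathsf d^\ell u\in\mathsf d^\ell\mathring W^\ell_p\}$, and assume continuous embeddings $\tilde X_p(K)\subset S(K,\Lambda^\ell)\subset X(K,\Lambda^\ell)$ for all $p$ (hence $\tilde X_p\subset S(\Lambda^\ell)\subset X(\Lambda^\ell)$). (A4) For every $K$ there are linear maps $R_{\ell,K}$ ($\ell$-forms to $(\ell-1)$-forms) and $R_{\ell+1,K}$ ($(\ell+1)$-forms to $\ell$-forms) on smooth forms on $K$ extending to bounded operators $R_{\ell+1,K}:L^2(K,\Lambda^{\ell+1})\to X(K,\Lambda^\ell)$, $R_{\ell,K}:X(K,\Lambda^\ell)\to S(K,\Lambda^{\ell-1})$, with $\mathsf d^{\ell-1}R_{\ell,K}+R_{\ell+1,K}\mathsf d^\ell=\mathrm{Id}$ on $X(K,\Lambda^\ell)$. (A5) $R_{\ell+1,K}\circ\mathsf d^\ell$ maps $W^\ell_p(K)$ into $W^\ell_p(K)$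 for all $K,p$. (A6) For all $K,p$ there are continuous linear projections $\pi^{\ell-1}_{p,K}:S(K,\Lambda^{\ell-1})\to W^{\ell-1}_p(K)$ and $\pi^\ell_{p,K}:S(K,\Lambda^\ell)\to W^\ell_p(K)$ (onto, idempotent). (A7) $\mathsf d^{\ell-1}$ maps $S(K,\Lambda^{\ell-1})$ into $S(K,\Lambda^\ell)$ and $\pi^\ell_{p,K}\mathsf d^{\ell-1}=\mathsf d^{\ell-1}\pi^{\ell-1}_{p,K}$ on $S(K,\Lambda^{\ell-1})$. (A8) There is $\varepsilon_{\ell-1}:\mathbb N\to\mathbb R^+$ with $\varepsilon_{\ell-1}(p)\to0$ such that $\|\mathsf d^{\ell-1}(\phi-\pi^{\ell-1}_{p,K}\phi)\|_{L^2(K)}\le\varepsilon_{\ell-1}(p)\|\phi\|_{S(K,\Lambda^{\ell-1})}$ for all $\phi\in S(K,\Lambda^{\ell-1})$, all $K$. Conformity condition: for $u\in\tilde X_p(K)$ and every $m$-dimensional facet $F$ of $K$ with $\ell\le m\le d$, vanishing trace of $u$ on $F$ implies vanishing trace of $\pi^\ell_{p,K}u$ on $F$, and analogously for $\pi^{\ell-1}_{p,K}$; consequently the elementwise definitions $(\Pi^k_pu)|_K=\pi^k_{p,K}(u|_K)$ give global linear projections $\Pi^\ell_p:S(\Lambda^\ell)\to\mathring W^\ell_p$ and $\Pi^{\ell-1}_p:S(\Lambda^{\ell-1})\to\mathring W^{\ell-1}_p$. *)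

From mathcomp Require Import all_boot all_order all_algebra.
From mathcomp Require Import all_classical all_reals all_analysis.
Set Implicit Arguments. Unset Strict Implicit. Unset Printing Implicit Defensive.
Import Order.TTheory GRing.Theory Num.Theory.
Local Open Scope classical_set_scope.
Local Open Scope ring_scope.

Definition lin_subspace (R : numDomainType) (V : lmodType R) (A : set V) : Prop :=
  A 0 /\ forall (a : R) (x y : V), A x -> A y -> A (a *: x + y).

Definition linear_on (R : numDomainType) (V W : lmodType R) (A : set V)
  (f : V -> W) : Prop :=
  forall (a : R) (x y : V), A x -> A y -> f (a *: x + y) = a *: f x + f y.

Definition norm_on (R : numDomainType) (V : lmodType R) (A : set V)
  (n : V -> R) : Prop :=
  lin_subspace A /\
  (forall x, A x -> 0 <= n x) /\
  (forall x, A x -> n x = 0 -> x = 0) /\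
  (forall (a : R) x, A x -> n (a *: x) = `|a| * n x) /\
  (forall x y, A x -> A y -> n (x + y) <= n x + n y).

(* A is a linear subspace of the product space  forall i, F i  (pointwise
   operations); used for global forms = families of their restrictions. *)
Definition family_subspace (R : numDomainType) (I : Type)
  (F : I -> lmodType R) (A : set (forall i, F i)) : Prop :=
  A (fun i => 0) /\
  forall (a : R) (u v : forall i, F i), A u -> A v ->
    A (fun i => a *: u i + v i).

From mathcomp Require Import all_boot all_order all_algebra.
From mathcomp Require Import all_classical all_reals all_analysis.
Set Implicit Arguments. Unset Strict Implicit. Unset Printing Implicit Defensive.
Import Order.TTheory GRing.Theory Num.Theory.
Local Open Scope classical_set_scope.
Local Open Scope ring_scope.

(* On each cell, (A4) splits u = d R_l u + R_(l+1) d u.  When d u = d w with w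
   smooth, (A5) makes the second part smooth, so the projection fixes it, while
   (A7) commutes the projection with d on the first part.  Hence
   u - pi u = d (R_l u - pi R_l u), which (A8) and the boundedness of R_l
   estimate by eps(p) ||u||_X; squaring and summing over the finitely many
   cells gives the global bound. *)

Lemma finite_family_bounded (R : realDomainType) (I : finType) (c : I -> R) :
  exists2 C : R, 0 < C & forall i, c i <= C.
Proof.
exists (1 + \sum_i `|c i|) => [|i].
  by rewrite ltr_wpDr ?ltr01 // sumr_ge0.
apply: (le_trans (ler_norm (c i))); apply: ler_wpDl; first exact: ler01.
by rewrite (bigD1 i) //= lerDl sumr_ge0.
Qed.

Lemma ler_sqrt_sum_sqr (R : rcfType) (I : finType) (k : R) (a b x : I -> R) :
  0 <= k -> (forall i, 0 <= a i) -> (forall i, a i <= k * b i) ->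
  (forall i, 0 <= x i) ->
  Num.sqrt (\sum_i a i ^+ 2) <= k * Num.sqrt (\sum_i (x i + b i ^+ 2)).
Proof.
move=> k0 a0 ab x0.
rewrite -[k]ger0_norm // -sqrtr_sqr -sqrtrM ?sqr_ge0 //.
apply: ler_wsqrtr; rewrite mulr_sumr; apply: ler_sum => i _.
rewrite mulrDr -exprMn ler_wpDl ?mulr_ge0 ?sqr_ge0 //.
by rewrite ler_sqr ?nnegrE ?(le_trans (a0 i) (ab i)).
Qed.

Section CellEstimate.
Context {R : numDomainType} {V0 V1 V2 : normedModType R}.
Context {D0 S0 : set V0} {X S1 W1 : set V1}.
Context {d0 : V0 -> V1} {d1 : V1 -> V2} {R0 : V1 -> V0} {R1 : V2 -> V1}.
Context {proj0 : V0 -> V0} {proj1 : V1 -> V1} {nS0 : V0 -> R} {nX : V1 -> R}.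

Hypothesis d0_linear : linear_on D0 d0.
Hypothesis S0_sub_D0 : forall x, S0 x -> D0 x.
Hypothesis proj0_S0 : forall x, S0 x -> S0 (proj0 x).
Hypothesis proj1_linear : linear_on S1 proj1.
Hypothesis proj1_id : forall w, W1 w -> proj1 w = w.
Hypothesis W1_sub_S1 : forall w, W1 w -> S1 w.
Hypothesis R0_S0 : forall u, X u -> S0 (R0 u).
Hypothesis homotopy : forall u, X u -> d0 (R0 u) + R1 (d1 u) = u.
Hypothesis R1d1_W1 : forall w, W1 w -> W1 (R1 (d1 w)).
Hypothesis d0_commute : forall phi, S0 phi ->
  S1 (d0 phi) /\ proj1 (d0 phi) = d0 (proj0 phi).

Lemma projection_error_split phi v : S0 phi -> W1 v ->
  (d0 phi + v) - proj1 (d0 phi + v) = d0 (phi - proj0 phi).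
Proof.
move=> S0phi Wv; have [S1dphi proj1_d0] := d0_commute S0phi.
have proj1_split : proj1 (d0 phi + v) = d0 (proj0 phi) + v.
  have := proj1_linear 1 S1dphi (W1_sub_S1 Wv).
  by rewrite !scale1r proj1_d0 (proj1_id Wv).
have -> : phi - proj0 phi = (-1) *: proj0 phi + phi by rewrite scaleN1r addrC.
rewrite d0_linear; [|exact/S0_sub_D0/proj0_S0|exact/S0_sub_D0].
by rewrite proj1_split scaleN1r opprD addrACA subrr addr0 addrC.
Qed.

Lemma projection_error_exact u w : X u -> W1 w -> d1 u = d1 w ->
  u - proj1 u = d0 (R0 u - proj0 (R0 u)).
Proof.
move=> Xu Ww duw; rewrite -[in LHS](homotopy Xu).
by apply: projection_error_split; [exact: R0_S0 | rewrite duw; exact: R1d1_W1].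
Qed.

Lemma projection_error_le (e c : R) u w :
  0 <= e -> (forall phi, S0 phi -> `|d0 (phi - proj0 phi)| <= e * nS0 phi) ->
  (forall u, X u -> nS0 (R0 u) <= c * nX u) ->
  X u -> W1 w -> d1 u = d1 w -> `|u - proj1 u| <= e * (c * nX u).
Proof.
move=> e0 approx R0_bounded Xu Ww duw.
rewrite (projection_error_exact Xu Ww duw).
apply: (le_trans (approx _ (R0_S0 Xu))).
by rewrite ler_wpM2l ?R0_bounded.
Qed.

End CellEstimate.

Theorem lemma3p1 (R : realType) (I : finType)
  (F0 F1 F2 : I -> normedModType R)
  (D0 : forall K, set (F0 K)) (D1 : forall K, set (F1 K))
  (d0 : forall K, F0 K -> F1 K) (d1 : forall K, F1 K -> F2 K)
  (Hr0 : set (forall K, F0 K)) (Hr1 : set (forall K, F1 K))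
  (X S1 : forall K, set (F1 K)) (S0 : forall K, set (F0 K))
  (nX nS1 : forall K, F1 K -> R) (nS0 : forall K, F0 K -> R)
  (W0 : nat -> forall K, set (F0 K)) (W1 : nat -> forall K, set (F1 K))
  (R0 : forall K, F1 K -> F0 K) (R1 : forall K, F2 K -> F1 K)
  (pi0 : nat -> forall K, F0 K -> F0 K) (pi1 : nat -> forall K, F1 K -> F1 K)
  (eps : nat -> R)
  (hD0 : forall K, lin_subspace (D0 K)) (hD1 : forall K, lin_subspace (D1 K))
  (hd0 : forall K, linear_on (D0 K) (d0 K))
  (hd1 : forall K, linear_on (D1 K) (d1 K))
  (hHr0 : family_subspace Hr0) (hHr1 : family_subspace Hr1)
  (hHr0D : forall u, Hr0 u -> forall K, D0 K (u K))
  (hHr1D : forall u, Hr1 u -> forall K, D1 K (u K))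
  (hX : forall K, norm_on (X K) (nX K))
  (hS0 : forall K, norm_on (S0 K) (nS0 K))
  (hS1 : forall K, norm_on (S1 K) (nS1 K))
  (hXD : forall K x, X K x -> D1 K x)
  (hS0D : forall K x, S0 K x -> D0 K x)
  (hW0 : forall p K, lin_subspace (W0 p K)) (hW1 : forall p K, lin_subspace (W1 p K))
  (hW1X : forall p K w, W1 p K w -> X K w)
  (hW0S : forall p K w, W0 p K w -> S0 K w)
  (hS1X : forall K, (forall x, S1 K x -> X K x) /\
           exists c : R, forall x, S1 K x -> nX K x <= c * nS1 K x)
  (hXtS : forall p K, exists c : R, forall x, X K x ->
           (exists w, W1 p K w /\ d1 K x = d1 K w) ->
           S1 K x /\ nS1 K x <= c * nX K x)
  (hR1 : forall K, linear_on setT (R1 K) /\ (forall v, X K (R1 K v)) /\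
          exists c : R, forall v, nX K (R1 K v) <= c * `|v|)
  (hR0 : forall K, linear_on (X K) (R0 K) /\ (forall u, X K u -> S0 K (R0 K u)) /\
          exists c : R, forall u, X K u -> nS0 K (R0 K u) <= c * nX K u)
  (hA4 : forall K u, X K u -> d0 K (R0 K u) + R1 K (d1 K u) = u)
  (hA5 : forall p K w, W1 p K w -> W1 p K (R1 K (d1 K w)))
  (hA6_0 : forall p K, linear_on (S0 K) (pi0 p K) /\
            (forall x, S0 K x -> W0 p K (pi0 p K x)) /\
            (forall w, W0 p K w -> pi0 p K w = w) /\
            exists c : R, forall x, S0 K x -> nS0 K (pi0 p K x) <= c * nS0 K x)
  (hA6_1 : forall p K, linear_on (S1 K) (pi1 p K) /\
            (forall x, S1 K x -> W1 p K (pi1 p K x)) /\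
            (forall w, W1 p K w -> pi1 p K w = w) /\
            exists c : R, forall x, S1 K x -> nS1 K (pi1 p K x) <= c * nS1 K x)
  (hA7 : forall p K phi, S0 K phi ->
          S1 K (d0 K phi) /\ pi1 p K (d0 K phi) = d0 K (pi0 p K phi))
  (heps_pos : forall p, 0 < eps p)
  (heps_lim : eps @ \oo --> 0)
  (hA8 : forall p K phi, S0 K phi ->
          `|d0 K (phi - pi0 p K phi)| <= eps p * nS0 K phi)
  (hconf1 : forall p (u : forall K, F1 K), Hr1 u -> (forall K, S1 K (u K)) ->
             Hr1 (fun K => pi1 p K (u K)))
  (hconf0 : forall p (u : forall K, F0 K), Hr0 u -> (forall K, S0 K (u K)) ->
             Hr0 (fun K => pi0 p K (u K))) :
  exists C : R, 0 < C /\
    forall (p : nat) (u : forall K, F1 K),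
      Hr1 u -> (forall K, X K (u K)) ->
      (exists w : forall K, F1 K, Hr1 w /\ (forall K, W1 p K (w K)) /\
                                  (forall K, d1 K (u K) = d1 K (w K))) ->
      Num.sqrt (\sum_(K : I) `|u K - pi1 p K (u K)| ^+ 2)
        <= C * eps p *
           Num.sqrt (\sum_(K : I) (`|u K| ^+ 2 + `|d1 K (u K)| ^+ 2 + nX K (u K) ^+ 2)).
Proof.
have /choice[c R0_bounded] : forall K, exists c : R,
    forall u, X K u -> nS0 K (R0 K u) <= c * nX K u.
  by move=> K; case: (hR0 K) => _ [].
have [C C0 cC] := finite_family_bounded c.
exists C; split => // p u _ Xu [w [_ [Ww duw]]].
have eps0 : 0 <= eps p := ltW (heps_pos p).
apply: ler_sqrt_sum_sqr => [|K|K|K];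
  rewrite ?mulr_ge0 ?addr_ge0 ?sqr_ge0 ?(ltW C0) //.
have [p1_linear [_ [p1_id _]]] := hA6_1 p K.
have p0_S0 x : S0 K x -> S0 K (pi0 p K x).
  by have [_ [p0_W0 _]] := hA6_0 p K; move/p0_W0; apply: hW0S.
have R0_S0 v : X K v -> S0 K (R0 K v) by case: (hR0 K) => _ [+ _]; apply.
have W1_sub_S1 v : W1 p K v -> S1 K v.
  have [c' S1_of_X] := hXtS p K.
  by move=> Wv; case: (S1_of_X v (hW1X _ _ _ Wv)) => //; exists v.
have nX0 : 0 <= nX K (u K) by case: (hX K) => _ [+ _]; apply.
apply: le_trans (projection_error_le (hd0 K) (@hS0D K) p0_S0 p1_linear p1_id
  W1_sub_S1 R0_S0 (@hA4 K) (@hA5 p K) (@hA7 p K) eps0 (@hA8 p K)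
  (R0_bounded K) (Xu K) (Ww K) (duw K)) _.
by rewrite mulrA (mulrC C) ler_wpM2r // ler_wpM2l.
Qed.
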